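(* Let $T$ be an invertible operator in $\mathcal D(\mathcal P_n)$. Then $$K_H(T)=\max\{\varrho[T\phi_n],\varrho[T^{-1}\phi_n]\}=\max\bigl\{d_H(Z(\phi_n),Z(T\phi_n)),\,d_H(Z(T^{-1}\phi_n),Z(\phi_n))\bigr\}.$$
   Context: Let $n\ge 1$ be an integer and $\mathcal P_n$ the complex vector space of polynomials in one complex variable of degree at most $n$; $\phi_k(z)=z^k/k!$. $D$ is differentiation on $\mathcal P_n$, $I$ the identity, and $\mathcal D(\mathcal P_n)$ the linear span of $I,D,\dots,D^n$. For a nonzero $f$, $Z(f)$ is the multiset of roots of $f$ (with multiplicity; empty for nonzero constants); $Z(0)=\mathbb C$. For nonconstant $f$, $\varrho[f]=\max\{|u|:u\in Z(f)\}$. For finite nonempty $A,B\subset\mathbb C$, $d_h(A,B)=\max_{y\in B}\min_{x\in A}|x-y|$ and $d_H(A,B)=\max\{d_h(A,B),d_h(B,A)\}$, with conventions: for $d\in\{d_h,d_H\}$, $d(\emptyset,\emptyset)=0$, $d(A,\emptyset)=d(\emptyset,A)=+\infty$ for $A\ne\emptyset$, and $d(A,B)=0$ if one of $A,B$ equals $\mathbb C$ and the other is nonempty. $K_H(T)=\sup_{f\in\mathcal P_n}d_H(Z(f),Z(Tf))$. *)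

From HB Require Import structures.
From mathcomp Require Import all_boot all_order all_algebra.
From mathcomp Require Import complex.
From mathcomp Require Import boolp classical_sets reals constructive_ereal ereal.
Set Implicit Arguments. Unset Strict Implicit. Unset Printing Implicit Defensive.
Import Order.TTheory GRing.Theory Num.Theory.
Local Open Scope ring_scope.
Local Open Scope classical_set_scope.

Section Defs.
Variable R : realType.
Local Notation C := (R[i]).

Definition Pn (n : nat) : set {poly C} := [set f | (size f <= n.+1)%N].

Definition phi (k : nat) : {poly C} := (k`!%:R)^-1 *: 'X^k.

Definition Dop (n : nat) (c : 'I_n.+1 -> C) (f : {poly C}) : {poly C} :=
  \sum_(k < n.+1) c k *: f^`(k).

(* Z(f): root set (multiplicities are irrelevant for distances); Z(0) = C *)
Definition Z (f : {poly C}) : set C :=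
  if f == 0 then setT else [set z | root f z].

Definition rho (f : {poly C}) : \bar R :=
  ereal_sup [set (ComplexField.Normc.normc u)%:E | u in [set u | root f u]].

(* directed Hausdorff distance with the paper's conventions *)
Definition dh (A B : set C) : \bar R :=
  if `[< A = set0 >] then (if `[< B = set0 >] then 0%E else +oo%E)
  else if `[< B = set0 >] then +oo%E
  else if `[< A = setT >] || `[< B = setT >] then 0%E
  else ereal_sup [set ereal_inf [set (ComplexField.Normc.normc (x - y))%:E | x in A] | y in B].

Definition dH (A B : set C) : \bar R := Order.max (dh A B) (dh B A).

Definition KH (n : nat) (T : {poly C} -> {poly C}) : \bar R :=
  ereal_sup [set dH (Z f) (Z (T f)) | f in Pn n].

End Defs.

(* For [T = sum_k c_k D^k] and [deg f <= n], the value [(T f)(w)] is the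
   apolar pairing [sum_j j! Q_j f^(n-j)(w)] of [f] with [Q = T phi_n].  Grace's
   theorem, proved by splitting off the linear factors of [Q] one at a time
   (each step being Laguerre's theorem on polar derivatives), says that this
   pairing cannot vanish when the roots of [Q] lie in the disk of radius [r]
   about 0 while those of [f] lie outside the disk of radius [r] about [w].
   So every root of [T f] is within [rho[T phi_n]] of a root of [f]; since
   [T^-1] is again a differential operator, every root of [f] is within
   [rho[T^-1 phi_n]] of a root of [T f].  Both bounds are attained, at [phi_n]
   and at [T^-1 phi_n], because [Z(phi_n) = {0}]. *)

From HB Require Import structures.
From mathcomp Require Import all_boot all_order all_algebra.
From mathcomp Require Import complex.
From mathcomp Require Import boolp classical_sets reals constructive_ereal ereal.
From mathcomp Require Import ring lra zify.
Import Order.TTheory GRing.Theory Num.Theory.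
Set Implicit Arguments. Unset Strict Implicit. Unset Printing Implicit Defensive.
Local Open Scope ring_scope.
Local Open Scope classical_set_scope.
Local Open Scope complex_scope.

Section SquaredModulus.
Variable R : rcfType.
Local Notation C := R[i].
Local Notation normc := (@ComplexField.Normc.normc R).

Definition sqn (x : C) : R := complex.Re x ^+ 2 + complex.Im x ^+ 2.

Lemma normcE (x : C) : normc x = Num.sqrt (sqn x).
Proof. by case: x. Qed.

Lemma sqn_ge0 (x : C) : 0 <= sqn x.
Proof. by rewrite /sqn addr_ge0 // sqr_ge0. Qed.

Lemma sqnM (x y : C) : sqn (x * y) = sqn x * sqn y.
Proof. by case: x => a b; case: y => c d; rewrite /sqn /=; ring. Qed.

Lemma sqnN (x : C) : sqn (- x) = sqn x.
Proof. by case: x => a b; rewrite /sqn /=; ring. Qed.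

Lemma sqn0 : sqn 0 = 0.
Proof. by rewrite /sqn /= expr0n addr0. Qed.

Lemma sqn_real (x : R) : sqn x%:C = x ^+ 2.
Proof. by rewrite /sqn /= expr0n /= addr0. Qed.

Lemma sqn_eq0 (x : C) : (sqn x == 0) = (x == 0).
Proof.
case: x => a b; rewrite /sqn /= paddr_eq0 ?sqr_ge0 // !sqrf_eq0.
by apply/andP/eqP => [[/eqP-> /eqP->] | [-> ->]].
Qed.

Lemma sqn_gt0 (x : C) : (0 < sqn x) = (x != 0).
Proof. by rewrite lt_def sqn_eq0 sqn_ge0 andbT. Qed.

Lemma normc_ge0 (x : C) : 0 <= normc x.
Proof. by rewrite normcE sqrtr_ge0. Qed.

Lemma normc_le (x : C) (r : R) : 0 <= r -> (normc x <= r) = (sqn x <= r ^+ 2).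
Proof.
by move=> r0; rewrite normcE -(ler_sqrt _ (sqr_ge0 r)) sqrtr_sqr ger0_norm.
Qed.

Lemma normc_real (x : R) : normc x%:C = `|x|.
Proof. by rewrite normcE sqn_real sqrtr_sqr. Qed.

Lemma ReD (x y : C) : complex.Re (x + y) = complex.Re x + complex.Re y.
Proof. by case: x; case: y. Qed.

Lemma ImD (x y : C) : complex.Im (x + y) = complex.Im x + complex.Im y.
Proof. by case: x; case: y. Qed.

Lemma Re_sum (I : Type) (s : seq I) (h : I -> C) :
  complex.Re (\sum_(i <- s) h i) = \sum_(i <- s) complex.Re (h i).
Proof. by elim: s => [|i s IH]; rewrite ?big_nil // !big_cons ReD IH. Qed.

Lemma Im_sum (I : Type) (s : seq I) (h : I -> C) :
  complex.Im (\sum_(i <- s) h i) = \sum_(i <- s) complex.Im (h i).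
Proof. by elim: s => [|i s IH]; rewrite ?big_nil // !big_cons ImD IH. Qed.

Lemma sqr_sum_le (I : Type) (s : seq I) (h : I -> R) :
  (\sum_(i <- s) h i) ^+ 2 <= (size s)%:R * \sum_(i <- s) h i ^+ 2.
Proof.
elim: s => [|i s IH]; first by rewrite !big_nil expr0n mul0r.
rewrite !big_cons /= mulrSr.
have Y0 : 0 <= \sum_(j <- s) h j ^+ 2 by rewrite sumr_ge0 // => j _; rewrite sqr_ge0.
have m0 : 0 <= (size s)%:R :> R by rewrite ler0n.
move: IH Y0 m0; set X := \sum_(_ <- _) _; set Y := \sum_(_ <- _) _ ^+ 2.
set m := (size s)%:R; set x := h i => IH Y0 m0.
have [m_eq0|mp] := eqVneq m 0.
  have -> : X = 0 by apply/eqP; rewrite -sqrf_eq0 eq_le sqr_ge0 andbT -(mul0r Y) -m_eq0.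
  rewrite m_eq0; nra.
have : 0 <= m * (m * x ^+ 2 - 2 * x * X + Y) by have := sqr_ge0 (m * x - X); nra.
rewrite pmulr_rge0 ?lt_def ?mp //; nra.
Qed.

Lemma sqn_sum_le (s : seq C) :
  sqn (\sum_(u <- s) u) <= (size s)%:R * \sum_(u <- s) sqn u.
Proof.
by rewrite /sqn Re_sum Im_sum big_split /= mulrDr lerD ?sqr_sum_le.
Qed.

End SquaredModulus.

Section PolarDerivative.
Variable F : fieldType.

Definition polarD (N : nat) (zeta : F) (f : {poly F}) : {poly F} :=
  N%:R *: f - ('X - zeta%:P) * f^`().

Definition apolar (N : nat) (Q f : {poly F}) (w : F) : F :=
  \sum_(j < N.+1) j`!%:R * Q`_j * (f^`(N - j)).[w].

Lemma horner_deriv_prod_XsubC (s : seq F) (v : F) : v \notin s ->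
  (\prod_(z <- s) ('X - z%:P))^`().[v] =
  (\prod_(z <- s) ('X - z%:P)).[v] * \sum_(z <- s) (v - z)^-1.
Proof.
elim: s => [|z s IH]; first by rewrite !big_nil -polyC1 derivC hornerC horner0 mulr0.
rewrite inE negb_or => /andP[vz vs].
rewrite !big_cons derivM derivXsubC mul1r hornerD !hornerM IH // hornerXsubC.
by field; rewrite subr_eq0.
Qed.

Lemma derivn_XsubC_mul_deriv (zeta : F) (f : {poly F}) (m : nat) :
  (('X - zeta%:P) * f^`())^`(m) = ('X - zeta%:P) * f^`(m.+1) + m%:R *: f^`(m).
Proof.
elim: m => [|m IH]; first by rewrite derivn0 derivn1 scale0r addr0.
rewrite derivnS IH derivD derivM derivXsubC mul1r derivZ -!derivnS.
by rewrite mulrSr scalerDl scale1r -addrA addrC -addrA.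
Qed.

Lemma horner_derivn_polarD (N : nat) (zeta w : F) (f : {poly F}) (m : nat) :
  ((polarD N zeta f)^`(m)).[w] =
  (N%:R - m%:R) * (f^`(m)).[w] - (w - zeta) * (f^`(m.+1)).[w].
Proof. by rewrite derivnB derivnZ derivn_XsubC_mul_deriv !hornerE; ring. Qed.

Lemma size_polarD (N : nat) (zeta : F) (f : {poly F}) :
  (size f <= N.+2)%N -> (size (polarD N.+1 zeta f) <= N.+1)%N.
Proof.
move=> sf; apply/leq_sizeP => j jN.
have f_eq0 k : (N.+2 <= k)%N -> f`_k = 0 by move=> kN; rewrite nth_default // (leq_trans sf).
rewrite coefB coefZ mulrBl coefB coefXM coefCM !coef_deriv (f_eq0 j.+1) // mul0rn mulr0 subr0.
case: j jN => [//|j] /=; rewrite ltnS leq_eqVlt => /orP[/eqP <-|jN].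
  by rewrite mulr_natl subrr.
by rewrite f_eq0 // mul0rn mulr0 subrr.
Qed.

Lemma apolar_mulXsubC (N : nat) (Q f : {poly F}) (w beta : F) :
  (size Q <= N.+1)%N ->
  apolar N.+1 (Q * ('X - beta%:P)) f w = apolar N Q (polarD N.+1 (w - beta) f) w.
Proof.
move=> sQ; rewrite /apolar.
under eq_bigr => j _ do rewrite mulrBr coefB coefMX coefMC mulrBr mulrBl.
rewrite sumrB big_ord_recl [X in _ - X]big_ord_recr /= (nth_default _ sQ).
rewrite !(mul0r, mulr0) add0r addr0 -sumrB; apply: eq_bigr => i _.
rewrite horner_derivn_polarD /bump /= add0n add1n.
have iN : (i <= N)%N by rewrite -ltnS ltn_ord.
rewrite subSS subSn // -natrB; last by rewrite (leq_trans (leq_subr _ _)).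
have -> : (N.+1 - (N - i))%N = i.+1 by lia.
by rewrite factS natrM; ring.
Qed.

End PolarDerivative.

Section Laguerre.
Variable R : rcfType.
Local Notation C := R[i].

(* With [a = v - w] and [u = (v - z)^-1], [lagq a d u] has the sign of
   [sqn (z - w) - d] (lagq_inv); when [sqn a <= d] it is concave in [u]. *)
Definition lagq (a : C) (d : R) (u : C) : R := sqn (a * u - 1) - d * sqn u.

Lemma lagqE (a : C) (d : R) (u : C) :
  lagq a d u = (sqn a - d) * sqn u - 2 * complex.Re (a * u) + 1.
Proof. by case: a => a1 a2; case: u => u1 u2; rewrite /lagq /sqn /=; ring. Qed.

Lemma lagq0 (a : C) (d : R) : lagq a d 0 = 1.
Proof. by rewrite /lagq mulr0 sub0r sqnN sqn0 mulr0 subr0 /sqn /= expr0n expr1n addr0. Qed.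

Lemma lagq_inv (v w z : C) (d : R) : v != z ->
  lagq (v - w) d (v - z)^-1 = (sqn (z - w) - d) * sqn (v - z)^-1.
Proof.
move=> vz; rewrite /lagq.
have -> : (v - w) * (v - z)^-1 - 1 = (z - w) * (v - z)^-1 by field; rewrite subr_eq0.
by rewrite sqnM mulrBl.
Qed.

Lemma sum_lagq (a : C) (d : R) (s : seq C) :
  \sum_(u <- s) lagq a d u =
  (sqn a - d) * \sum_(u <- s) sqn u - 2 * complex.Re (a * \sum_(u <- s) u) + (size s)%:R.
Proof.
elim: s => [|u s IH]; first by rewrite !big_nil !mulr0 /=; ring.
by rewrite !big_cons IH lagqE !mulrDr ReD /= mulrSr; ring.
Qed.

Lemma lagq_mean_gt0 (a ust : C) (d : R) (us : seq C) :
  sqn a <= d -> us != [::] -> (forall u, u \in us -> 0 < lagq a d u) ->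
  \sum_(u <- us) u = (size us)%:R * ust -> 0 < lagq a d ust.
Proof.
move=> ad us0 us_gt0 sumE.
have sum_gt0 : 0 < \sum_(u <- us) lagq a d u.
  case: us us0 us_gt0 {sumE} => [//|u us] _ us_gt0.
  rewrite big_cons ltr_pwDl ?us_gt0 ?mem_head // big_seq sumr_ge0 // => v vus.
  by rewrite ltW // us_gt0 // inE vus orbT.
have CS := sqn_sum_le us.
rewrite sum_lagq sumE in sum_gt0; rewrite sumE in CS.
have natC k : k%:R = (k%:R : R)%:C by rewrite rmorph_nat.
rewrite natC sqnM sqn_real in CS; rewrite natC mulrCA in sum_gt0.
rewrite lagqE.
move: sum_gt0 CS; set N := (size us)%:R : R; set Q := \sum_(_ <- _) _.
have N_gt0 : 0 < N by rewrite ltr0n lt0n size_eq0.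
have -> : complex.Re (N%:C * (a * ust)) = N * complex.Re (a * ust).
  by case: (a * ust) => x y /=; ring.
move=> sum_gt0 CS; have Np_le : N * sqn ust <= Q.
  by rewrite -(ler_pM2l N_gt0) mulrA -expr2.
have A_le0 : sqn a - d <= 0 by rewrite subr_le0.
have : 0 < N * ((sqn a - d) * sqn ust - 2 * complex.Re (a * ust) + 1) by nra.
by rewrite pmulr_rgt0.
Qed.

Theorem laguerre (N : nat) (f : {poly C}) (w zeta v : C) (d : R) :
  (0 < N)%N -> (size f <= N.+1)%N ->
  (forall z, root f z -> d < sqn (z - w)) -> sqn (zeta - w) <= d -> sqn (v - w) <= d ->
  ~~ root (polarD N zeta f) v.
Proof.
move=> N_gt0 sf f_far zeta_in v_in; apply/negP => root_v.
have fv : f.[v] != 0 by apply/negP => /f_far; rewrite ltNge v_in.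
have f0 : f != 0 by apply: contraNneq fv => ->; rewrite horner0.
have [s fE] := closed_field_poly_normal f.
have lc0 : lead_coef f != 0 by rewrite lead_coef_eq0.
have vs : v \notin s by rewrite -root_prod_XsubC -(rootZ _ _ lc0) -fE.
have ss : (size s <= N)%N by move: sf; rewrite fE size_scale // size_prod_XsubC.
set S := \sum_(z <- s) (v - z)^-1.
have NE : N%:R = (v - zeta) * S.
  have f'v : f^`().[v] = f.[v] * S.
    by rewrite fE derivZ !hornerZ horner_deriv_prod_XsubC // mulrA.
  move: root_v; rewrite /root /polarD !hornerE f'v subr_eq0 => /eqP E.
  by apply: (mulIf fv); rewrite E; ring.
have vzeta : v - zeta != 0.
  by apply: contra_eq_neq NE => ->; rewrite mul0r pnatr_eq0 -lt0n.
(* Padded with zeros, the points [(v - z)^-1] are [N] points with mean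
   [(v - zeta)^-1]; all of them lie where [lagq] is positive. *)
set us := [seq (v - z)^-1 | z <- s] ++ nseq (N - size s) 0.
have size_us : size us = N by rewrite size_cat size_map size_nseq subnKC.
have : 0 < lagq (v - w) d (v - zeta)^-1.
  apply: (@lagq_mean_gt0 _ _ _ us) => //.
  - by rewrite -size_eq0 size_us -lt0n.
  - move=> u; rewrite mem_cat mem_nseq => /orP[/mapP[z zs ->]|/andP[_ /eqP->]].
      rewrite lagq_inv; last by apply: contraNneq vs => ->.
      rewrite mulr_gt0 ?subr_gt0 ?f_far ?sqn_gt0 ?invr_eq0 ?subr_eq0 //.
        by rewrite fE rootZ // root_prod_XsubC.
      by apply: contraNneq vs => ->.
    by rewrite lagq0.
  - rewrite size_us big_cat /= big_map -/S [X in _ + X]big1_seq ?addr0 ?NE.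
      by field.
    by move=> u /andP[_]; rewrite mem_nseq => /andP[_ /eqP].
rewrite lagq_inv -1?subr_eq0 // pmulr_lgt0 ?sqn_gt0 ?invr_eq0 //.
by rewrite subr_gt0 ltNge zeta_in.
Qed.

Theorem grace (N : nat) (Q f : {poly C}) (w : C) (d : R) :
  size Q = N.+1 -> (size f <= N.+1)%N -> 0 <= d ->
  (forall b, root Q b -> sqn b <= d) -> (forall z, root f z -> d < sqn (z - w)) ->
  apolar N Q f w != 0.
Proof.
elim: N Q f => [|N IH] Q f sQ sf d0 Q_in f_far.
  rewrite /apolar big_ord1 /= mul1r mulf_neq0 //.
    by have := lead_coef_eq0 Q; rewrite lead_coefE sQ -size_poly_eq0 sQ => ->.
  by apply/negP => /f_far; rewrite subrr sqn0 ltNge d0.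
have [b rb] : exists b, root Q b by apply/closed_rootP; rewrite sQ.
have [Q1 QE] := factor_theorem _ _ rb.
have Q10 : Q1 != 0 by apply: contra_eq_neq sQ; rewrite QE => ->; rewrite mul0r size_poly0.
have sQ1 : size Q1 = N.+1.
  by move: sQ; rewrite QE size_mul ?polyXsubC_eq0 // size_XsubC addn2 => -[].
rewrite QE apolar_mulXsubC ?sQ1 //; apply: IH => //.
- exact: size_polarD.
- by move=> b' rb'; apply: Q_in; rewrite QE rootM rb'.
- move=> z; apply: contraTT; rewrite -leNgt => z_in.
  apply: laguerre sf f_far _ z_in => //.
  by rewrite addrAC subrr add0r sqnN Q_in.
Qed.

End Laguerre.

Section DifferentialOperators.
Variable R : realType.
Local Notation C := R[i].
Implicit Types (n : nat) (f g Q : {poly C}).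

Lemma natf_fact_neq0 n : (n`!%:R : C) != 0.
Proof. by rewrite pnatr_eq0 -lt0n fact_gt0. Qed.

Lemma size_phi n : size (phi R n) = n.+1.
Proof. by rewrite /phi size_scale ?size_polyXn // invr_eq0 natf_fact_neq0. Qed.

Lemma coef_phi n j : (phi R n)`_j = (j == n)%:R / n`!%:R.
Proof. by rewrite /phi coefZ coefXn mulrC. Qed.

Lemma derivn_phi n k : (k <= n)%N -> (phi R n)^`(k) = phi R (n - k).
Proof.
move=> kn; rewrite /phi derivnZ derivnXn -scalerMnr scalerMnl -mulr_natr; congr (_ *: _).
have ffact_neq0 : (n ^_ k)%:R != 0 :> C by rewrite pnatr_eq0 -lt0n ffact_gt0.
by rewrite -(ffact_fact kn) natrM invfM mulrAC mulVf ?mul1r.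
Qed.

Lemma poly_phi_expansion n g : (size g <= n.+1)%N ->
  g = \sum_(m < n.+1) (m`!%:R * g`_m) *: phi R m.
Proof.
move=> sg; have -> : \sum_(m < n.+1) (m`!%:R * g`_m) *: phi R m = \poly_(m < n.+1) g`_m.
  rewrite poly_def; apply: eq_bigr => m _.
  by rewrite /phi scalerA mulrAC mulfV ?natf_fact_neq0 ?mul1r.
apply/polyP => j; rewrite coef_poly; case: ltnP => // jg.
by rewrite nth_default // (leq_trans sg jg).
Qed.

Fact Dop_is_linear n (c : 'I_n.+1 -> C) : linear (Dop c).
Proof.
move=> a u v; rewrite /Dop scaler_sumr -big_split; apply: eq_bigr => k _ /=.
by rewrite linearP scalerDr !scalerA mulrC.
Qed.

HB.instance Definition _ n (c : 'I_n.+1 -> C) :=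
  GRing.isLinear.Build C {poly C} {poly C} _ (Dop c) (Dop_is_linear c).

Lemma DopZ n (c : 'I_n.+1 -> C) a f : Dop c (a *: f) = a *: Dop c f.
Proof. exact: linearZ. Qed.

Lemma in_Pn n f : (f \in @Pn R n) = (size f <= n.+1)%N.
Proof. by apply/idP/idP => [/set_mem|/mem_set]. Qed.

Lemma Dop_derivn n (c : 'I_n.+1 -> C) f m : Dop c f^`(m) = (Dop c f)^`(m).
Proof.
rewrite /Dop raddf_sum; apply: eq_bigr => k _.
by rewrite /= derivnZ /derivn -!iterD addnC.
Qed.

Lemma size_Dop n (c : 'I_n.+1 -> C) f : (size (Dop c f) <= size f)%N.
Proof.
apply/leq_sizeP => j jf; rewrite /Dop coef_sum big1 // => k _.
by rewrite coefZ coef_derivn nth_default ?mul0rn ?mulr0 // (leq_trans jf) ?leq_addl.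
Qed.

Lemma rev_ordE n (j : 'I_n.+1) : rev_ord j = (n - j)%N :> nat.
Proof. by rewrite /= subSS. Qed.

Lemma coef_Dop_phi n (c : 'I_n.+1 -> C) (j : 'I_n.+1) :
  (Dop c (phi R n))`_j = c (rev_ord j) / j`!%:R.
Proof.
have jn : (j <= n)%N by rewrite -ltnS.
rewrite /Dop coef_sum (bigD1 (rev_ord j)) // big1 ?Monoid.mulm1 => [|k kj].
  by rewrite coefZ rev_ordE derivn_phi ?leq_subr // coef_phi (subKn jn) eqxx mul1r.
have kn : (k <= n)%N by rewrite -ltnS.
rewrite coefZ derivn_phi // coef_phi.
suff /negPf-> : j != (n - k)%N :> nat by rewrite mul0r mulr0.
apply: contraNneq kj => jE; apply/eqP/ord_inj.
by rewrite rev_ordE jE (subKn kn).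
Qed.

Lemma horner_Dop_apolar n (c : 'I_n.+1 -> C) f w :
  (Dop c f).[w] = apolar n (Dop c (phi R n)) f w.
Proof.
rewrite /apolar /Dop horner_sum (reindex_inj rev_ord_inj); apply: eq_bigr => j _.
by rewrite coef_Dop_phi hornerZ rev_ordE mulrCA mulfV ?natf_fact_neq0 ?mulr1.
Qed.

Definition Dop_coefs n Q : 'I_n.+1 -> C := fun k => (n - k)`!%:R * Q`_(n - k).

Lemma Dop_coefs_phi n Q : (size Q <= n.+1)%N -> Dop (@Dop_coefs n Q) (phi R n) = Q.
Proof.
move=> sQ; apply/polyP => j; have [jn|nj] := ltnP j n.+1.
  have jn' : (j <= n)%N by rewrite -ltnS.
  rewrite (coef_Dop_phi _ (Ordinal jn)) /Dop_coefs rev_ordE (subKn jn').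
  by rewrite mulrAC mulfV ?natf_fact_neq0 ?mul1r.
have sD : (size (Dop (@Dop_coefs n Q) (phi R n)) <= n.+1)%N.
  by rewrite -[n.+1](size_phi n) size_Dop.
by rewrite !nth_default // ?(leq_trans sQ nj) ?(leq_trans sD nj).
Qed.

End DifferentialOperators.

Section InverseOperator.
Variable R : realType.
Local Notation C := R[i].
Variables (n : nat) (c : 'I_n.+1 -> C) (Tinv : {poly C} -> {poly C}).
Hypothesis Tinv_Pn : forall f, f \in @Pn R n -> Tinv f \in @Pn R n.
Hypothesis DopK : forall f, f \in @Pn R n -> Tinv (Dop c f) = f.
Hypothesis TinvK : forall f, f \in @Pn R n -> Dop c (Tinv f) = f.

Let cinv : 'I_n.+1 -> C := Dop_coefs (Tinv (phi R n)).

Let phi_Pn : phi R n \in @Pn R n.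
Proof. by rewrite in_Pn size_phi. Qed.

Let Dop_cinv_phi : Dop cinv (phi R n) = Tinv (phi R n).
Proof. by rewrite Dop_coefs_phi // -in_Pn Tinv_Pn. Qed.

(* [D] commutes with [T] and [cinv], so differentiating [T (cinv phi_n) = phi_n]
   gives the same identity for every [phi_m]. *)
Let Dop_cinvK_phi m : (m <= n)%N -> Dop c (Dop cinv (phi R m)) = phi R m.
Proof.
move=> mn; rewrite -(subKn mn) -derivn_phi ?leq_subr //.
by rewrite !Dop_derivn Dop_cinv_phi TinvK.
Qed.

Let Dop_cinvK (g : {poly C}) : (size g <= n.+1)%N -> Dop c (Dop cinv g) = g.
Proof.
move=> sg; rewrite [in LHS](poly_phi_expansion sg) [Dop cinv _]linear_sum.
rewrite [Dop c _]linear_sum {2}(poly_phi_expansion sg); apply: eq_bigr => m _.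
by rewrite /= [Dop cinv _]DopZ [Dop c _]DopZ Dop_cinvK_phi // -ltnS.
Qed.

Lemma Tinv_Dop : exists cinv : 'I_n.+1 -> C, forall g, g \in @Pn R n -> Tinv g = Dop cinv g.
Proof.
exists cinv => g; rewrite in_Pn => sg.
by rewrite -{1}(Dop_cinvK sg) DopK // in_Pn (leq_trans (size_Dop _ _)).
Qed.

Lemma size_Dop_phi : size (Dop c (phi R n)) = n.+1.
Proof.
have [cinv' cinvE] := Tinv_Dop.
have Q_Pn : Dop c (phi R n) \in @Pn R n.
  by rewrite in_Pn -[n.+1](size_phi R n) size_Dop.
apply/anti_leq; rewrite -in_Pn Q_Pn /= -[n.+1](size_phi R n).
by rewrite -{1}(DopK phi_Pn) cinvE ?size_Dop.
Qed.

Lemma size_Tinv_phi : size (Tinv (phi R n)) = n.+1.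
Proof.
apply/anti_leq; rewrite -in_Pn Tinv_Pn //= -[n.+1](size_phi R n).
by rewrite -{1}(TinvK phi_Pn) size_Dop.
Qed.

End InverseOperator.

Section HausdorffDistance.
Variable R : realType.
Local Notation C := R[i].
Local Notation normc := (@ComplexField.Normc.normc R).

Lemma seq_argmax (T : eqType) d (U : orderType d) (h : T -> U) (s : seq T) :
  s != [::] -> exists2 x, x \in s & forall y, y \in s -> (h y <= h x)%O.
Proof.
elim: s => [//|a [|b s] IH] _.
  by exists a; rewrite ?mem_head // => y; rewrite inE => /eqP ->.
have [x xs x_max] := IH isT.
have [hxa|hax] := leP (h x) (h a).
  exists a; rewrite ?mem_head // => y; rewrite inE => /orP[/eqP -> //|/x_max].
  by move/le_trans; apply.
exists x; first by rewrite inE xs orbT.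
by move=> y; rewrite inE => /orP[/eqP ->|/x_max //]; rewrite ltW.
Qed.

Lemma rho_max (Q : {poly C}) : (1 < size Q)%N ->
  exists b, [/\ root Q b, forall z, root Q z -> normc z <= normc b &
                 rho Q = (normc b)%:E].
Proof.
move=> sQ; have Q0 : Q != 0 by rewrite -size_poly_gt0 (ltn_trans _ sQ).
have [s QE] := closed_field_poly_normal Q.
have lc0 : lead_coef Q != 0 by rewrite lead_coef_eq0.
have rootE z : root Q z = (z \in s) by rewrite QE rootZ // root_prod_XsubC.
have s0 : s != [::].
  by apply: contraTneq sQ => s0; rewrite QE s0 big_nil size_scale // size_poly1.
have [b bs b_max] := seq_argmax normc s0.
exists b; split; [by rewrite rootE | by move=> z; rewrite rootE; apply: b_max |].
apply/eqP; rewrite eq_le; apply/andP; split.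
  by apply: ge_ereal_sup => _ [z /= rz <-]; rewrite lee_fin b_max // -rootE.
by apply: ereal_sup_ubound; exists b => //=; rewrite rootE.
Qed.

Lemma dHC (A B : set C) : dH A B = dH B A.
Proof. by rewrite /dH maxC. Qed.

Lemma dh_le (A B : set C) (M : \bar R) : (0 <= M)%E -> (B = set0 -> A = set0) ->
  (forall y, B y -> exists2 x, A x & ((normc (x - y))%:E <= M)%E) ->
  (dh A B <= M)%E.
Proof.
move=> M0 BA near; rewrite /dh.
have [A0|A0] := pselect (A = set0).
  have B0 : B = set0 by apply/seteqP; split => // y /near [x]; rewrite A0.
  by rewrite (asboolT A0) (asboolT B0).
have B0 : B <> set0 by move/BA.
rewrite (asboolF A0) (asboolF B0); case: ifP => // _.
apply: ge_ereal_sup => _ [y By <-]; have [x Ax xy] := near y By.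
by apply: ge_ereal_inf; exists (normc (x - y))%:E => //; exists x.
Qed.

Lemma dh0_ge (B : set C) (y : C) : B y -> B <> setT ->
  ((normc y)%:E <= dh [set 0%R : C] B)%E.
Proof.
move=> By BT; rewrite /dh.
have B0 : B <> set0 by move=> B0; rewrite B0 in By.
have S0 : [set 0 : C] <> set0 by move/seteqP => [/(_ 0 erefl)].
have ST : [set 0 : C] <> setT by move/seteqP => [_ /(_ 1 I) /eqP]; rewrite oner_eq0.
rewrite (asboolF S0) (asboolF B0) (asboolF ST) (asboolF BT) /=.
by apply: ereal_sup_ubound; exists y => //; rewrite image_set1 ereal_inf1 sub0r normcN.
Qed.

Lemma Z_phi n : (1 <= n)%N -> Z (phi R n) = [set 0].
Proof.
move=> n_ge1; have phi0 : phi R n != 0 by rewrite -size_poly_eq0 size_phi.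
rewrite /Z (negbTE phi0); apply/seteqP; split => z /=;
  rewrite /phi rootZ ?invr_eq0 ?natf_fact_neq0 // rootE hornerXn expf_eq0 n_ge1 /=.
  by move/eqP.
by move->.
Qed.

Lemma dH0_rho (Q : {poly C}) : (1 < size Q)%N -> dH [set 0 : C] (Z Q) = rho Q.
Proof.
move=> sQ; have [b [rb b_max ->]] := rho_max sQ.
have ZQE : Z Q = [set z | root Q z].
  by rewrite /Z -size_poly_eq0 gtn_eqF // (ltn_trans _ sQ).
have ZQ0 : Z Q <> set0 by rewrite ZQE => /seteqP[/(_ b rb)].
have ZQT : Z Q <> setT.
  rewrite ZQE => /seteqP[_ /(_ (normc b + 1)%:C I) /b_max].
  by rewrite normc_real ger0_norm ?addr_ge0 ?normc_ge0 // leNgt ltrDl ltr01.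
have b0 : (0 <= (normc b)%:E)%E by rewrite lee_fin normc_ge0.
rewrite /dH ZQE in ZQ0 ZQT *; apply/eqP.
rewrite eq_le le_max (dh0_ge rb ZQT) andbT ge_max; apply/andP; split.
  apply: dh_le => // y ry.
  by exists 0 => //; rewrite sub0r normcN lee_fin b_max.
apply: dh_le => // [/seteqP[/(_ 0 erefl)] //|y ->].
by exists b; rewrite // subr0 lee_fin.
Qed.

Lemma dh_roots_le (f g : {poly C}) (r : R) : 0 <= r ->
  (forall y, root g y -> exists2 x, root f x & normc (x - y) <= r) ->
  (forall y, root f y -> exists x, root g x) ->
  (dh [set z | root f z] [set z | root g z] <= r%:E)%E.
Proof.
move=> r0 near_f ex_g; apply: dh_le => [|g0|y /near_f[x rx xy]].
- by rewrite lee_fin.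
- apply/seteqP; split => // y /ex_g[x rx].
  by have : [set z | root g z] x by []; rewrite g0.
- by exists x; rewrite ?lee_fin.
Qed.

Lemma dH_Z_le (f g : {poly C}) (r : R) : f != 0 -> g != 0 -> 0 <= r ->
  (forall y, root g y -> exists2 x, root f x & normc (x - y) <= r) ->
  (forall y, root f y -> exists2 x, root g x & normc (x - y) <= r) ->
  (dH (Z f) (Z g) <= r%:E)%E.
Proof.
move=> f0 g0 r0 near_f near_g; rewrite /dH /Z (negbTE f0) (negbTE g0) ge_max.
rewrite !dh_roots_le //.
- by move=> y /near_f[x rx _]; exists x.
- by move=> y /near_g[x rx _]; exists x.
Qed.

End HausdorffDistance.

Section RootLocation.
Variable R : realType.
Local Notation C := R[i].
Local Notation normc := (@ComplexField.Normc.normc R).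

Lemma Dop_root_near n (c : 'I_n.+1 -> C) (f : {poly C}) (w : C) (r : R) :
  size (Dop c (phi R n)) = n.+1 -> (size f <= n.+1)%N -> 0 <= r ->
  (forall b, root (Dop c (phi R n)) b -> normc b <= r) ->
  root (Dop c f) w -> exists2 z, root f z & normc (z - w) <= r.
Proof.
move=> sQ sf r0 Q_in rw; apply: contrapT => no_near.
have f_far z : root f z -> r ^+ 2 < sqn (z - w).
  move=> rz; rewrite ltNge -normc_le //; apply/negP => near.
  by apply: no_near; exists z.
have Q_in' b : root (Dop c (phi R n)) b -> sqn b <= r ^+ 2.
  by move=> rb; rewrite -normc_le ?Q_in.
have := grace sQ sf (sqr_ge0 r) Q_in' f_far.
by rewrite -horner_Dop_apolar (eqP rw) eqxx.
Qed.

Lemma KH_Dop_le n (c cinv : 'I_n.+1 -> C) : (1 <= n)%N ->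
  size (Dop c (phi R n)) = n.+1 -> size (Dop cinv (phi R n)) = n.+1 ->
  (forall f : {poly C}, (size f <= n.+1)%N -> Dop cinv (Dop c f) = f) ->
  (KH n (Dop c) <= Order.max (rho (Dop c (phi R n))) (rho (Dop cinv (phi R n))))%E.
Proof.
move=> n_ge1 sQ1 sQ2 DopK.
have size_gt1 (Q : {poly C}) : size Q = n.+1 -> (1 < size Q)%N by move->.
have [b1 [_ b1_max ->]] := rho_max (size_gt1 _ sQ1).
have [b2 [_ b2_max ->]] := rho_max (size_gt1 _ sQ2).
set r := Num.max (normc b1) (normc b2).
have r0 : 0 <= r by rewrite le_max normc_ge0.
have Q1_in b : root (Dop c (phi R n)) b -> normc b <= r.
  by move/b1_max/le_trans; apply; rewrite le_max lexx.
have Q2_in b : root (Dop cinv (phi R n)) b -> normc b <= r.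
  by move/b2_max/le_trans; apply; rewrite le_max lexx orbT.
rewrite -EFin_max; apply: ge_ereal_sup => _ [f /= sf <-].
have [->|f0] := eqVneq f 0.
  rewrite linear0 /dH /Z eqxx ge_max !dh_le ?lee_fin // => y _.
  by exists y; rewrite // subrr ComplexField.Normc.normc0 lee_fin.
have sTf : (size (Dop c f) <= n.+1)%N := leq_trans (size_Dop _ _) sf.
have Tf0 : Dop c f != 0.
  by apply: contra_neq f0 => Tf0; rewrite -(DopK _ sf) Tf0 linear0.
apply: dH_Z_le => // y.
  exact: Dop_root_near sQ1 sf r0 Q1_in.
by rewrite -{1}(DopK _ sf); apply: Dop_root_near sQ2 sTf r0 Q2_in.
Qed.

End RootLocation.

Theorem mainTheorem5 (R : realType) (n : nat) (c : 'I_n.+1 -> R[i])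
    (Tinv : {poly R[i]} -> {poly R[i]}) :
  (1 <= n)%N ->
  (forall f, f \in @Pn R n -> Tinv f \in @Pn R n) ->
  (forall f, f \in @Pn R n -> Tinv (Dop c f) = f) ->
  (forall f, f \in @Pn R n -> Dop c (Tinv f) = f) ->
  KH n (Dop c) = Order.max (rho (Dop c (@phi R n))) (rho (Tinv (@phi R n))) /\
  Order.max (rho (Dop c (@phi R n))) (rho (Tinv (@phi R n))) =
  Order.max (dH (Z (@phi R n)) (Z (Dop c (@phi R n)))) (dH (Z (Tinv (@phi R n))) (Z (@phi R n))).
Proof.
move=> n_ge1 Tinv_Pn DopK TinvK.
have [cinv TinvE] := Tinv_Dop Tinv_Pn DopK TinvK.
have phi_Pn : phi R n \in @Pn R n by rewrite in_Pn size_phi.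
have sQ1 := size_Dop_phi Tinv_Pn DopK TinvK.
have sQ2 := size_Tinv_phi Tinv_Pn TinvK.
have dH1 : dH (Z (phi R n)) (Z (Dop c (phi R n))) = rho (Dop c (phi R n)).
  by rewrite Z_phi // dH0_rho // sQ1.
have dH2 : dH (Z (Tinv (phi R n))) (Z (phi R n)) = rho (Tinv (phi R n)).
  by rewrite dHC Z_phi // dH0_rho // sQ2.
rewrite dH1 dH2; split => //; apply/eqP; rewrite eq_le; apply/andP; split.
  rewrite TinvE //; apply: KH_Dop_le => // [|f sf]; first by rewrite -TinvE.
  by rewrite -TinvE ?DopK ?in_Pn // (leq_trans (size_Dop _ _)).
rewrite ge_max -{1}dH1 -dH2 !ereal_sup_ubound //.
  by exists (Tinv (phi R n)); [exact/set_mem/Tinv_Pn | rewrite TinvK].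
by exists (phi R n); first exact: set_mem.
Qed.
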